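(* The category $\mathbf{AlgFrm}$ of algebraic frames and coherent frame homomorphisms is dually equivalent to the category $\mathbf{AlgLPries}$ of algebraic L-spaces and coherent L-morphisms.
   Context: A frame is a complete lattice satisfying $a\wedge\bigvee S=\bigvee\{a\wedge s\mid s\in S\}$; frame homomorphisms preserve finite meets and arbitrary joins. In a frame $L$, $a\ll b$ means whenever $b\le\bigvee S$ there is finite $T\subseteq S$ with $a\le\bigvee T$; $a$ is compact if $a\ll a$; $K(L)$ is the set of compact elements. $L$ is algebraic if $a=\bigvee\{b\in K(L)\mid b\le a\}$ for all $a$. A frame homomorphism is coherent if it maps compact elements to compact elements. A Priestley space is a Stone space $X$ with a partial order such that clopen upsets separate points. An L-space is a Priestley space in which the downset of each clopen set is clopen and the closure of each open upset is open. ${\sf ClopUp}(X)$ is the set of clopen upsets; $\mathrm{cl}$ denotes closure. An L-morphism is a continuous order-preserving map $f:X\to X'$ between L-spaces with $f^{-1}(\mathrm{cl}\,U)=\mathrm{cl}\,f^{-1}(U)$ for every open upset $U$ of $X'$. The spatial part of $X$ is $Y=\{y\in X\mid{\downarrow}y\text{ clopen}\}$. A Scott upset is a closed upset $F$ with $\min F\subseteq Y$; ${\sf ClopSUp}(X)$ is the set of clopen Scott upsets; $\mathrm{core}\,U=\bigcup\{V\in{\sf ClopSUp}(X)\mid V\subseteq U\}$ for $U\in{\sf ClopUp}(X)$. $X$ is an algebraic L-space if $\mathrm{core}\,U$ is dense in $U$ for each $U\in{\sf ClopUp}(X)$. An L-morphism $f:X_1\to X_2$ is coherent if $f^{-1}(\mathrm{core}\,U)\subseteq\mathrm{core}\,f^{-1}(U)$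 for all $U\in{\sf ClopUp}(X_2)$. *)

From mathcomp Require Import all_boot all_order.
From mathcomp Require Import all_classical.
From mathcomp Require Import topology.

Set Implicit Arguments.
Unset Strict Implicit.
Unset Printing Implicit Defensive.

Local Open Scope classical_set_scope.

Record frame := Frame {
  fcar :> Type;
  fle : fcar -> fcar -> Prop;
  fjoin : set fcar -> fcar;
  fmeet : fcar -> fcar -> fcar;
  ftop : fcar;
  fle_refl : forall a, fle a a;
  fle_anti : forall a b, fle a b -> fle b a -> a = b;
  fle_trans : forall a b c, fle a b -> fle b c -> fle a c;
  fjoin_ub : forall (S : set fcar) s, S s -> fle s (fjoin S);
  fjoin_least : forall (S : set fcar) b,
      (forall s, S s -> fle s b) -> fle (fjoin S) b;
  fmeet_lbl : forall a b, fle (fmeet a b) a;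
  fmeet_lbr : forall a b, fle (fmeet a b) b;
  fmeet_greatest : forall a b c, fle c a -> fle c b -> fle c (fmeet a b);
  ftop_greatest : forall a, fle a ftop;
  frame_distr : forall a (S : set fcar),
      fmeet a (fjoin S) = fjoin [set fmeet a s | s in S]
}.

Section FrameDefs.
Variable L : frame.

Definition way_below (a b : L) : Prop :=
  forall S : set L, fle b (fjoin S) ->
    exists T : set L, [/\ finite_set T, T `<=` S & fle a (fjoin T)].

Definition fcompact (a : L) : Prop := way_below a a.

Definition Kel : set L := [set a | fcompact a].

Definition algebraic_frame : Prop :=
  forall a : L, a = fjoin [set b | Kel b /\ fle b a].
End FrameDefs.

Definition frame_hom (L M : frame) (h : L -> M) : Prop :=
  [/\ forall a b, h (fmeet a b) = fmeet (h a) (h b),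
      h (ftop L) = ftop M &
      forall S : set L, h (fjoin S) = fjoin (h @` S)].

Definition coherent_frame_hom (L M : frame) (h : L -> M) : Prop :=
  frame_hom h /\ forall a, fcompact a -> fcompact (h a).

Record otop := OTop {
  ocar :> topologicalType;
  ole : ocar -> ocar -> Prop;
  ole_refl : forall x, ole x x;
  ole_anti : forall x y, ole x y -> ole y x -> x = y;
  ole_trans : forall x y z, ole x y -> ole y z -> ole x z
}.

Section OTopDefs.
Variable X : otop.

Definition upset (U : set X) : Prop := forall x y, U x -> ole x y -> U y.
Definition downset_of (U : set X) : set X := [set x | exists2 u, U u & ole x u].

Definition stone_space : Prop :=
  [/\ compact [set: X], hausdorff_space X & totally_disconnected [set: X]].

Definition priestley_space : Prop :=
  stone_space /\
  forall x y : X, ~ ole x y ->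
    exists U : set X, [/\ clopen U, upset U, U x & ~ U y].

Definition L_space : Prop :=
  [/\ priestley_space,
      (forall U : set X, clopen U -> clopen (downset_of U)) &
      (forall U : set X, open U -> upset U -> open (closure U))].

Definition ClopUp : set (set X) := [set U | clopen U /\ upset U].

Definition spatial_part : set X := [set y | clopen (downset_of [set y])].

Definition minimals (F : set X) : set X :=
  [set x | F x /\ forall z, F z -> ole z x -> z = x].

Definition scott_upset (F : set X) : Prop :=
  [/\ closed F, upset F & minimals F `<=` spatial_part].

Definition ClopSUp : set (set X) := [set U | clopen U /\ scott_upset U].

Definition core (U : set X) : set X :=
  \bigcup_(V in [set V | ClopSUp V /\ V `<=` U]) V.

Definition algebraic_L_space : Prop :=
  L_space /\ forall U, ClopUp U -> U `<=` closure (core U).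
End OTopDefs.

Definition order_preserving (X1 X2 : otop) (f : X1 -> X2) : Prop :=
  forall x y, ole x y -> ole (f x) (f y).

Definition L_morphism (X1 X2 : otop) (f : X1 -> X2) : Prop :=
  [/\ continuous f, order_preserving f &
      forall U : set X2, open U -> upset U ->
        f @^-1` (closure U) = closure (f @^-1` U)].

Definition coherent_L_morphism (X1 X2 : otop) (f : X1 -> X2) : Prop :=
  L_morphism f /\
  forall U : set X2, ClopUp U -> f @^-1` (core U) `<=` core (f @^-1` U).

Record AlgFrm := AlgFrmOb { af_frame :> frame; af_alg : algebraic_frame af_frame }.
Definition AlgFrm_hom (L M : AlgFrm) :=
  {h : af_frame L -> af_frame M | coherent_frame_hom h}.

Record AlgLPries := AlgLPriesOb { al_space :> otop; al_alg : algebraic_L_space al_space }.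
Definition AlgLPries_hom (X Y : AlgLPries) :=
  {f : al_space X -> al_space Y | coherent_L_morphism f}.

Definition AlgFrm_iso (L M : AlgFrm) (h : AlgFrm_hom L M) : Prop :=
  exists g : AlgFrm_hom M L,
    (forall a, proj1_sig g (proj1_sig h a) = a) /\
    (forall b, proj1_sig h (proj1_sig g b) = b).

Definition AlgLPries_iso (X Y : AlgLPries) (f : AlgLPries_hom X Y) : Prop :=
  exists g : AlgLPries_hom Y X,
    (forall x, proj1_sig g (proj1_sig f x) = x) /\
    (forall y, proj1_sig f (proj1_sig g y) = y).

(* Morphisms are
   compared through their underlying functions (extensionally). *)
Definition dually_equivalent_AlgFrm_AlgLPries : Prop :=
  exists (Fo : AlgFrm -> AlgLPries)
         (Fm : forall L M : AlgFrm, AlgFrm_hom L M -> AlgLPries_hom (Fo M) (Fo L))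
         (Go : AlgLPries -> AlgFrm)
         (Gm : forall X Y : AlgLPries, AlgLPries_hom X Y -> AlgFrm_hom (Go Y) (Go X))
         (eta : forall L : AlgFrm, AlgFrm_hom L (Go (Fo L)))
         (eps : forall X : AlgLPries, AlgLPries_hom X (Fo (Go X))),
  [/\
      ((forall (L : AlgFrm) (i : AlgFrm_hom L L),
         (forall a, proj1_sig i a = a) ->
         forall x, proj1_sig (Fm L L i) x = x)
      /\ (forall (L M N : AlgFrm) (h : AlgFrm_hom L M) (k : AlgFrm_hom M N)
              (kh : AlgFrm_hom L N),
         (forall a, proj1_sig kh a = proj1_sig k (proj1_sig h a)) ->
         forall x, proj1_sig (Fm L N kh) x
                   = proj1_sig (Fm L M h) (proj1_sig (Fm M N k) x))),
      ((forall (X : AlgLPries) (i : AlgLPries_hom X X),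
         (forall x, proj1_sig i x = x) ->
         forall a, proj1_sig (Gm X X i) a = a)
      /\ (forall (X Y Z : AlgLPries) (f : AlgLPries_hom X Y) (g : AlgLPries_hom Y Z)
              (gf : AlgLPries_hom X Z),
         (forall x, proj1_sig gf x = proj1_sig g (proj1_sig f x)) ->
         forall a, proj1_sig (Gm X Z gf) a
                   = proj1_sig (Gm X Y f) (proj1_sig (Gm Y Z g) a))),
      (forall L : AlgFrm, AlgFrm_iso (eta L)) /\
      (forall (L M : AlgFrm) (h : AlgFrm_hom L M) a,
         proj1_sig (eta M) (proj1_sig h a)
         = proj1_sig (Gm _ _ (Fm L M h)) (proj1_sig (eta L) a)) &
      (forall X : AlgLPries, AlgLPries_iso (eps X)) /\
      (forall (X Y : AlgLPries) (f : AlgLPries_hom X Y) x,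
         proj1_sig (eps Y) (proj1_sig f x)
         = proj1_sig (Fm _ _ (Gm X Y f)) (proj1_sig (eps X) x))].

(* A frame [L] is represented by the space of its prime filters, ordered by inclusion
   and carrying the patch topology generated by the sets [stone a] of prime filters
   containing [a] and their complements: this is the Priestley dual of [L] viewed as a
   distributive lattice.  Because meets distribute over arbitrary joins, the closure of an
   open upset, i.e. of a union of sets [stone a], is [stone] of the join, so the space is an
   L-space whose clopen upsets are exactly the [stone a].  A prime filter minimal above a
   compact [k] is completely prime, hence a spatial point, so [stone k] is a clopen Scott
   upset and algebraicity of [L] transfers to the space.
   Conversely the clopen upsets of an L-space form a frame whose joins are closures of
   unions; by compactness its compact elements are exactly the clopen Scott upsets, and
   every point is recovered from the prime filter of clopen upsets containing it.  Both
   functors act by preimage, and coherence on one side is preservation of compact elements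
   on the other. *)

From HB Require Import structures.
From mathcomp Require Import all_boot all_order all_classical topology.

Set Implicit Arguments.
Unset Strict Implicit.
Unset Printing Implicit Defensive.

Local Open Scope classical_set_scope.

Lemma proj1_sig_inj (T : Type) (P : T -> Prop) : injective (@proj1_sig T P).
Proof. exact: eq_sig_hprop (fun _ _ _ => Prop_irrelevance _ _). Qed.

Lemma finite_set_ind (T : Type) (P : set T -> Prop) :
  P set0 -> (forall x A, P A -> P (x |` A)) -> forall A, finite_set A -> P A.
Proof.
move=> P0 PU A /finite_setP[n]; elim: n A => [A|n IH A /eq_cardSP[x Ax /IH PA]].
  by rewrite II0 card_eq0 => /eqP ->.
by rewrite -(setD1K Ax); exact: PU.
Qed.

(** * Compactness *)

Section TopologyFacts.
Variable T : topologicalType.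
Implicit Types (A K : set T) (x : T).

Lemma open_locally A : (forall x, A x -> exists2 B, open B /\ B x & B `<=` A) -> open A.
Proof.
move=> h; rewrite openE => x /h[B [oB Bx] sBA].
by apply: (filterS sBA); apply: open_nbhs_nbhs.
Qed.

Lemma closureP A x : closure A x <-> forall B, open B -> B x -> exists y, A y /\ B y.
Proof.
split => [h B oB Bx|h B]; first by have [y []] := h B (open_nbhs_nbhs (conj oB Bx)); exists y.
rewrite nbhsE => -[B' [oB' B'x] sB]; have [y [Ay By]] := h B' oB' B'x.
by exists y; split => //; exact: sB.
Qed.

Lemma closed_closureE A : closed A -> closure A = A.
Proof. by move/closure_id. Qed.

Lemma closed_finite_bigcup (I : Type) (D : set I) (f : I -> set T) :
  finite_set D -> (forall i, D i -> closed (f i)) -> closed (\bigcup_(i in D) f i).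
Proof.
move=> fD; pattern D; apply: (finite_set_ind _ _ fD) => [|i D' IH] cf.
  by rewrite bigcup_set0; exact: closed0.
rewrite bigcup_setU1; apply: closedU; first by apply: cf; left.
by apply: IH => j D'j; apply: cf; right.
Qed.

Lemma compact_directed_cover K (O : set (set T)) :
  compact K -> (forall o, O o -> open o) -> K `<=` \bigcup_(o in O) o ->
  O !=set0 -> (forall o1 o2, O o1 -> O o2 -> exists2 o3, O o3 & o1 `|` o2 `<=` o3) ->
  exists2 o, O o & K `<=` o.
Proof.
move=> cK Oop cov [o0 Oo0] dir; apply: contrapT => nex.
have ne o : O o -> (K `\` o) !=set0.
  move=> Oo; apply/set0P/negP => /eqP Ko; apply: nex; exists o => // x Kx.
  by apply: contrapT => nox; have : (K `\` o) x by []; rewrite Ko.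
have FF : Filter (filter_from O (fun o => K `\` o)).
  apply: filter_from_filter; first by exists o0.
  move=> i j Oi Oj; have [k Ok sk] := dir _ _ Oi Oj; exists k => // x [Kx nkx].
  by split; split => // ?; apply: nkx; apply: sk; [left|right].
have [p [Kp clp]] :=
  cK _ (filter_from_proper FF ne) (ex_intro2 _ _ o0 Oo0 (fun _ => @proj1 _ _)).
have [o Oo op] := cov _ Kp.
have [x [[_ nox] ox]] := clp _ _ (ex_intro2 _ _ o Oo (fun _ => id))
  (open_nbhs_nbhs (conj (Oop _ Oo) op)).
exact: nox.
Qed.

Lemma compact_filtered_closed_inter K (C : set (set T)) :
  compact K -> (forall c, C c -> closed c) -> C !=set0 ->
  (forall c1 c2, C c1 -> C c2 -> exists2 c3, C c3 & c3 `<=` c1 `&` c2) ->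
  (forall c, C c -> K `&` c !=set0) ->
  exists2 x, K x & forall c, C c -> c x.
Proof.
move=> cK Ccl [c0 Cc0] dir ne; apply: contrapT => nex.
have [o [c Cc <-] Ko] : exists2 o, [set ~` c | c in C] o & K `<=` o.
  apply: compact_directed_cover => //.
  - by move=> _ [c Cc <-]; rewrite openC; exact: Ccl.
  - move=> x Kx; apply: contrapT => nc; apply: nex; exists x => // c Cc.
    by apply: contrapT => ncx; apply: nc; exists (~` c) => //; exists c.
  - by exists (~` c0); exists c0.
  move=> _ _ [c1 C1 <-] [c2 C2 <-]; have [c3 C3 s3] := dir _ _ C1 C2.
  by exists (~` c3); [exists c3|move=> x hx /s3[]; case: hx].
by have [x [Kx cx]] := ne _ Cc; exact: Ko Kx cx.
Qed.

End TopologyFacts.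

(** * Priestley spaces and L-spaces *)

Section PriestleySpaces.
Variable X : otop.
Implicit Types (U V W A F : set X) (x y : X).

Lemma ClopUp_setT : ClopUp [set: X].
Proof. by split; [exact: clopenT|]. Qed.

Lemma ClopUp_set0 : ClopUp (set0 : set X).
Proof. by split; [exact: clopen0|]. Qed.

Lemma ClopUp_setI U V : ClopUp U -> ClopUp V -> ClopUp (U `&` V).
Proof.
move=> [cU uU] [cV uV]; split; first exact: clopenI.
by move=> x y [Ux Vx] xy; split; [exact: uU Ux xy|exact: uV Vx xy].
Qed.

Lemma ClopUp_setU U V : ClopUp U -> ClopUp V -> ClopUp (U `|` V).
Proof.
move=> [cU uU] [cV uV]; split; first exact: clopenU.
by move=> x y [Ux|Vx] xy; [left; exact: uU Ux xy|right; exact: uV Vx xy].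
Qed.

Hypothesis hP : priestley_space X.

Lemma priestley_compact : compact [set: X].
Proof. by case: hP => [[]]. Qed.

Lemma priestley_closed_compact A : closed A -> compact A.
Proof. by move=> cA; exact: subclosed_compact cA priestley_compact _. Qed.

Lemma priestley_separation x y : ~ ole x y -> exists U, [/\ ClopUp U, U x & ~ U y].
Proof. by case: hP => _ h /h[U [cU uU Ux nUy]]; exists U. Qed.

Lemma priestley_open_basis (O : set X) x : open O -> O x ->
  exists U V, [/\ ClopUp U, ClopUp V, U x, ~ V x & U `\` V `<=` O].
Proof.
move=> oO Ox.
pose Fam := [set C | exists U V, [/\ ClopUp U, ClopUp V, U x, ~ V x & C = ~` U `|` V]].
have [_ [U [V [cU cV Ux nVx ->]]] sub] : exists2 o, Fam o & ~` O `<=` o.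
  apply: compact_directed_cover.
  - by apply: priestley_closed_compact; exact: open_closedC.
  - move=> _ [U [V [[[_ cU] _] [[oV _] _] _ _ ->]]].
    by apply: openU => //; exact: closed_openC.
  - move=> y nOy; have nyx : y <> x by move=> e; apply: nOy; rewrite e.
    have [xy|nxy] := pselect (ole x y).
      have [|V [cV Vy nVx]] := @priestley_separation y x.
        by move=> yx; apply: nyx; exact: ole_anti.
      exists (~` setT `|` V); last by right.
      by exists setT, V; split => //; exact: ClopUp_setT.
    have [U [cU Ux nUy]] := priestley_separation nxy.
    exists (~` U `|` set0); last by left.
    by exists U, set0; split => //; exact: ClopUp_set0.
  - exists (~` setT `|` set0), setT, set0.
    by split => //; [exact: ClopUp_setT|exact: ClopUp_set0].
  move=> _ _ [U1 [V1 [cU1 cV1 U1x V1x ->]]] [U2 [V2 [cU2 cV2 U2x V2x ->]]].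
  exists (~` (U1 `&` U2) `|` (V1 `|` V2)).
    exists (U1 `&` U2), (V1 `|` V2).
    by split => //; [exact: ClopUp_setI|exact: ClopUp_setU|case].
  by move=> z [[nU1|V1z]|[nU2|V2z]]; [left=> -[]|right; left|left=> -[]|right; right].
exists U, V; split => // z [Uz nVz]; apply: contrapT => nOz.
by case: (sub z nOz).
Qed.

Lemma priestley_downset_closed A : closed A -> closed (downset_of A).
Proof.
move=> cA; rewrite -[downset_of A]setCK closedC; apply: open_locally => y ny.
have [_ [U [[[oU _] uU] Uy] <-] sub] :
    exists2 o, [set ~` U | U in [set U | ClopUp U /\ U y]] o & A `<=` o.
  apply: compact_directed_cover (priestley_closed_compact cA) _ _ _ _.
  - by move=> _ [U [[[_ cU] _] _] <-]; exact: closed_openC.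
  - move=> k Ak; have [|U [cU Uy nUk]] := @priestley_separation y k.
      by move=> yk; apply: ny; exists k.
    by exists (~` U) => //; exists U.
  - by exists (~` setT), setT; split => //; exact: ClopUp_setT.
  move=> _ _ [U1 [cU1 U1y] <-] [U2 [cU2 U2y] <-].
  exists (~` (U1 `&` U2)); first by exists (U1 `&` U2) => //; split; [exact: ClopUp_setI|].
  by move=> z [n1|n2] [a b]; [exact: n1|exact: n2].
exists U => // z Uz [k Ak zk]; apply: (sub k Ak); exact: uU Uz zk.
Qed.

Lemma priestley_down1_closed x : closed (downset_of [set x]).
Proof.
apply: priestley_downset_closed; apply: (compact_closed _ (@compact_set1 _ x)).
by case: hP => [[]].
Qed.

Lemma priestley_chain_lower_bound F (C : set X) : closed F -> C `<=` F -> C !=set0 ->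
  (forall y z, C y -> C z -> ole y z \/ ole z y) ->
  exists2 m, F m & forall y, C y -> ole m y.
Proof.
move=> cF CF [y0 Cy0] tot.
have [m _ hm] : exists2 m, [set: X] m &
    forall c, [set F `&` downset_of [set y] | y in C] c -> c m.
  apply: compact_filtered_closed_inter priestley_compact _ _ _ _.
  - by move=> _ [y _ <-]; apply: closedI cF _; exact: priestley_down1_closed.
  - by exists (F `&` downset_of [set y0]), y0.
  - move=> _ _ [y1 C1 <-] [y2 C2 <-]; have [y12|y21] := tot _ _ C1 C2.
      exists (F `&` downset_of [set y1]); first by exists y1.
      move=> z [Fz [_ -> zy1]]; split; split => //; first by exists y1.
      by exists y2 => //; exact: ole_trans zy1 y12.
    exists (F `&` downset_of [set y2]); first by exists y2.
    move=> z [Fz [_ -> zy2]]; split; split => //; last by exists y2.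
    by exists y1 => //; exact: ole_trans zy2 y21.
  move=> _ [y Cy <-]; exists y; split => //; split; first exact: CF.
  by exists y => //; exact: ole_refl.
exists m; first by have [] := hm _ (ex_intro2 _ _ y0 Cy0 erefl).
by move=> y Cy; have [_ [_ -> my]] := hm _ (ex_intro2 _ _ y Cy erefl).
Qed.

Lemma priestley_minimal_below F x : closed F -> F x -> exists2 m, minimals F m & ole m x.
Proof.
move=> cF Fx.
pose R (a b : {y | F y /\ ole y x}) := `[< ole (proj1_sig b) (proj1_sig a) >].
have Rrefl a : R a a by apply/asboolP; exact: ole_refl.
have Rtrans a b c : R a b -> R b c -> R a c.
  by move=> /asboolP ab /asboolP bc; apply/asboolP; exact: ole_trans bc ab.
have Ranti a b : R a b -> R b a -> a = b.
  by move=> /asboolP ab /asboolP ba; apply: proj1_sig_inj; exact: ole_anti.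
have Rchain (A : set {y | F y /\ ole y x}) : total_on A R -> exists t, forall s, A s -> R s t.
  move=> totA; have [[a Aa]|A0] := pselect (exists a, A a); last first.
    by exists (exist _ x (conj Fx (ole_refl x))) => s As; case: A0; exists s.
  have [|||m Fm mA] := @priestley_chain_lower_bound F [set proj1_sig s | s in A] cF.
  - by move=> _ [s _ <-]; case: (proj2_sig s).
  - by exists (proj1_sig a), a.
  - by move=> _ _ [s As <-] [t At <-]; case: (totA _ _ As At) => /asboolP; [right|left].
  have mx : ole m x.
    by apply: ole_trans (mA _ (imageP _ Aa)) _; case: (proj2_sig a).
  by exists (exist _ m (conj Fm mx)) => s As; apply/asboolP; exact: mA (imageP _ As).
have [[t [Ft tx]] tmin] := Zorn Rrefl Rtrans Ranti Rchain.
exists t => //; split => // z Fz zt.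
have Rtz : R (exist _ t (conj Ft tx)) (exist _ z (conj Fz (ole_trans zt tx))).
  by apply/asboolP.
by have /(congr1 (@proj1_sig _ _)) := tmin _ Rtz.
Qed.

End PriestleySpaces.

Section LSpaces.
Variable X : otop.
Hypothesis hL : L_space X.

Lemma L_space_priestley : priestley_space X.
Proof. by case: hL. Qed.

Lemma closure_upset (U : set X) : upset U -> upset (closure U).
Proof.
move=> uU x y clx xy; apply/closureP => B oB By.
have [V [W [[cV _] [cW _] Vy nWy sub]]] := priestley_open_basis L_space_priestley oB By.
have [_ hD _] := hL.
have [oD _] : clopen (downset_of (V `&` ~` W)) by apply: hD; exact: clopenI (clopenC W cW).
have [u [Uu [c [Vc nWc] uc]]] := (closureP _ _).1 clx _ oD (ex_intro2 _ _ y (conj Vy nWy) xy).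
by exists c; split; [exact: uU Uu uc|exact: sub].
Qed.

Lemma closure_open_upset_ClopUp (U : set X) : open U -> upset U -> ClopUp (closure U).
Proof.
move=> oU uU; split; last exact: closure_upset.
by split; [case: hL => _ _; apply|exact: closed_closure].
Qed.

End LSpaces.

(** * The frame of clopen upsets *)

Section ClopUpFrame.
Variable X : otop.
Hypothesis hL : L_space X.

Definition clopup := {U : set X | ClopUp U}.

Lemma clopup_open (a : clopup) : open (proj1_sig a).
Proof. by case: (proj2_sig a) => -[]. Qed.

Lemma clopup_closed (a : clopup) : closed (proj1_sig a).
Proof. by case: (proj2_sig a) => -[]. Qed.

Lemma clopup_upset (a : clopup) : upset (proj1_sig a).
Proof. by case: (proj2_sig a). Qed.

Arguments clopup_open : clear implicits.
Arguments clopup_closed : clear implicits.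
Arguments clopup_upset : clear implicits.

Lemma clopup_join_ClopUp (S : set clopup) : ClopUp (closure (\bigcup_(s in S) proj1_sig s)).
Proof.
apply: closure_open_upset_ClopUp => //; first by apply: bigcup_open => s _; exact: clopup_open.
by move=> x y [s Ss sx] xy; exists s => //; exact: clopup_upset s _ _ sx xy.
Qed.

Definition clopup_le (a b : clopup) := proj1_sig a `<=` proj1_sig b.
Definition clopup_join (S : set clopup) : clopup := exist _ _ (clopup_join_ClopUp S).
Definition clopup_meet (a b : clopup) : clopup :=
  exist _ _ (ClopUp_setI (proj2_sig a) (proj2_sig b)).
Definition clopup_top : clopup := exist _ _ (@ClopUp_setT X).

Lemma clopup_le_refl a : clopup_le a a. Proof. by []. Qed.

Lemma clopup_le_anti a b : clopup_le a b -> clopup_le b a -> a = b.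
Proof. by move=> ab ba; apply: proj1_sig_inj; apply/seteqP. Qed.

Lemma clopup_le_trans a b c : clopup_le a b -> clopup_le b c -> clopup_le a c.
Proof. by move=> ab bc x /ab /bc. Qed.

Lemma clopup_join_ub (S : set clopup) s : S s -> clopup_le s (clopup_join S).
Proof. by move=> Ss x sx; apply: subset_closure; exists s. Qed.

Lemma clopup_join_least (S : set clopup) b :
  (forall s, S s -> clopup_le s b) -> clopup_le (clopup_join S) b.
Proof.
move=> h; rewrite /clopup_le /= -(closed_closureE (clopup_closed b)).
by apply: closureS => x [s Ss sx]; exact: h Ss x sx.
Qed.

Lemma clopup_meet_lbl a b : clopup_le (clopup_meet a b) a. Proof. by move=> x []. Qed.
Lemma clopup_meet_lbr a b : clopup_le (clopup_meet a b) b. Proof. by move=> x []. Qed.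

Lemma clopup_meet_greatest a b c :
  clopup_le c a -> clopup_le c b -> clopup_le c (clopup_meet a b).
Proof. by move=> ca cb x cx; split; [exact: ca|exact: cb]. Qed.

Lemma clopup_top_greatest a : clopup_le a clopup_top. Proof. by []. Qed.

Lemma clopup_distr a (S : set clopup) :
  clopup_meet a (clopup_join S) = clopup_join [set clopup_meet a s | s in S].
Proof.
apply: proj1_sig_inj => /=; apply/seteqP; split.
  move=> x [ax clx]; apply/closureP => B oB Bx.
  have oAB : open (proj1_sig a `&` B) by apply: openI => //; exact: clopup_open.
  have [y [[s Ss sy] [ay By]]] := (closureP _ _).1 clx _ oAB (conj ax Bx).
  by exists y; split => //; exists (clopup_meet a s) => //; exists s.
move=> x clx; split.
  rewrite -(closed_closureE (clopup_closed a)); apply: (closureS _ clx).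
  by move=> y [_ [s Ss <-] []].
by apply: (closureS _ clx) => y [_ [s Ss <-] [_ sy]]; exists s.
Qed.

Definition clopup_frame : frame :=
  @Frame clopup clopup_le clopup_join clopup_meet clopup_top clopup_le_refl
    clopup_le_anti clopup_le_trans clopup_join_ub clopup_join_least clopup_meet_lbl
    clopup_meet_lbr clopup_meet_greatest clopup_top_greatest clopup_distr.

Lemma ClopUp_of_ClopSUp (U : set X) : ClopSUp U -> ClopUp U.
Proof. by case=> cU [_ uU _]. Qed.

Lemma ClopSUp_compact (v : clopup_frame) : ClopSUp (proj1_sig v) -> fcompact v.
Proof.
(* Each point of [v] lies above a minimal one, which is spatial, so its open downset
   meets some [s] in [S]: [v] is covered by [S] itself, not only by the closure of the
   union, and compactness of [v] finishes. *)
move=> [_ [cv uv mv]] S vS.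
have vcover : proj1_sig v `<=` \bigcup_(s in S) proj1_sig s.
  move=> x vx; have [m [vm minm] mx] := priestley_minimal_below (L_space_priestley hL) cv vx.
  have [om _] : spatial_part m by apply: mv; split.
  have [y [[s Ss sy] [_ -> ym]]] := (closureP _ _).1 (vS m vm) _ om
     (ex_intro2 _ _ m erefl (ole_refl m)).
  by exists s => //; apply: (clopup_upset s _ _ sy); exact: ole_trans ym mx.
have [_ [T [fT sT] <-] vT] : exists2 o,
    [set \bigcup_(s in T) proj1_sig s | T in [set T | finite_set T /\ T `<=` S]] o &
    proj1_sig v `<=` o.
  apply: compact_directed_cover (priestley_closed_compact (L_space_priestley hL) cv) _ _ _ _.
  - by move=> _ [T _ <-]; apply: bigcup_open => s _; exact: clopup_open.
  - move=> x /vcover[s Ss sx]; exists (\bigcup_(t in [set s]) proj1_sig t).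
      by exists [set s] => //; split; [exact: finite_set1|move=> t ->].
    by exists s.
  - by exists (\bigcup_(t in (set0 : set clopup)) proj1_sig t), set0; split => // t.
  move=> _ _ [T1 [f1 s1] <-] [T2 [f2 s2] <-].
  exists (\bigcup_(t in T1 `|` T2) proj1_sig t).
    by exists (T1 `|` T2) => //; split; [rewrite finite_setU|move=> t [/s1|/s2]].
  by move=> x [[t T1t tx]|[t T2t tx]]; exists t => //; [left|right].
by exists T; split => // x /vT; exact: subset_closure.
Qed.

Lemma ClopSUp_of_sub_core (U : set X) : ClopUp U -> U `<=` core U -> ClopSUp U.
Proof.
move=> [cU uU] sub; split => //; split => //; first by case: cU.
move=> m [Um minm]; have [V [[_ [_ _ mV]] VU] Vm] := sub m Um.
by apply: mV; split => // z Vz zm; apply: minm => //; exact: VU.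
Qed.

Lemma core_clopupE (U : set X) :
  core U = \bigcup_(w in [set w : clopup | ClopSUp (proj1_sig w) /\ proj1_sig w `<=` U])
             proj1_sig w.
Proof.
apply/seteqP; split => x; last by move=> [w wU wx]; exists (proj1_sig w).
by move=> [V [csV VU] Vx]; exists (exist _ V (ClopUp_of_ClopSUp csV)).
Qed.

Hypothesis halg : algebraic_L_space X.

Lemma compact_ClopSUp (v : clopup_frame) : fcompact v -> ClopSUp (proj1_sig v).
Proof.
move=> cv; apply: ClopSUp_of_sub_core; first exact: (proj2_sig v).
pose S := [set w : clopup | ClopSUp (proj1_sig w) /\ proj1_sig w `<=` proj1_sig v].
have [T [fT sT vT]] :
    exists T : set clopup_frame, [/\ finite_set T, T `<=` S & fle v (fjoin T)].
  by apply: cv => x vx; rewrite /= -core_clopupE; exact: (proj2 halg) _ (proj2_sig v) x vx.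
have cT : closed (\bigcup_(s in T) proj1_sig (s : clopup)).
  by apply: closed_finite_bigcup => // s _; exact: clopup_closed.
move=> x /vT; rewrite /= (closed_closureE cT) core_clopupE => -[t Tt tx].
by exists t => //; exact: sT.
Qed.

Lemma clopup_frame_algebraic : algebraic_frame clopup_frame.
Proof.
move=> a; apply: clopup_le_anti; last by apply: clopup_join_least => b [].
move=> x ax; apply: closureS ((proj2 halg) _ (proj2_sig a) x ax) => y [V [csV Va] Vy].
exists (exist _ V (ClopUp_of_ClopSUp csV)) => //; split => //.
exact: ClopSUp_compact.
Qed.

End ClopUpFrame.

Arguments clopup_open {X}.
Arguments clopup_closed {X}.
Arguments clopup_upset {X}.

Definition clopup_AlgFrm (X : AlgLPries) : AlgFrm :=
  AlgFrmOb (@clopup_frame_algebraic X (proj1 (al_alg X)) (al_alg X)).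

Lemma L_morphism_preimage_ClopUp (X Y : otop) (f : X -> Y) (U : set Y) :
  L_morphism f -> ClopUp U -> ClopUp (f @^-1` U).
Proof.
move=> [cf of_ _] [cU uU]; split; first exact: preimage_clopen.
by move=> x y fx xy; apply: uU fx _; exact: of_.
Qed.

Section ClopUpPreimage.
Variables (X Y : otop) (hLX : L_space X) (halgY : algebraic_L_space Y).
Variable f : X -> Y.
Hypothesis hf : coherent_L_morphism f.

Definition clopup_preimage (u : clopup_frame (proj1 halgY)) : clopup_frame hLX :=
  exist _ _ (L_morphism_preimage_ClopUp (proj1 hf) (proj2_sig u)).

Lemma clopup_preimage_hom : frame_hom clopup_preimage.
Proof.
split=> [a b|//|S]; apply: proj1_sig_inj => //=.
have [_ _ ->] := proj1 hf; last 2 first.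
- by apply: bigcup_open => s _; exact: clopup_open.
- by move=> x y [s Ss sx] xy; exists s => //; exact: clopup_upset s _ _ sx xy.
congr closure; apply/seteqP; split => x; last by move=> [_ [s Ss <-] sx]; exists s.
by move=> [s Ss sx]; exists (clopup_preimage s) => //; exists s.
Qed.

Lemma clopup_preimage_coherent : coherent_frame_hom clopup_preimage.
Proof.
split=> [|a /(compact_ClopSUp halgY) csa]; first exact: clopup_preimage_hom.
apply: ClopSUp_compact; apply: ClopSUp_of_sub_core; first exact: proj2_sig.
by move=> x fx; apply: (proj2 hf _ (proj2_sig a)); exists (proj1_sig a) => //; split.
Qed.

End ClopUpPreimage.

Section OrderHomeomorphism.
Variables (X Y : otop) (f : X -> Y) (g : Y -> X).
Hypotheses (fK : cancel f g) (gK : cancel g f).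
Hypotheses (cf : continuous f) (cg : continuous g).
Hypotheses (of_ : order_preserving f) (og : order_preserving g).

Lemma homeo_preimage_closure (U : set Y) : f @^-1` closure U = closure (f @^-1` U).
Proof.
apply/seteqP; split => x /closureP clx; apply/closureP => B oB Bx.
  have [|y [Uy By]] := clx _ ((continuousP g).1 cg B oB); first by rewrite /= fK.
  by exists (g y); rewrite /= gK.
have [y [Uy By]] := clx _ ((continuousP f).1 cf B oB) Bx.
by exists (f y).
Qed.

Lemma homeo_preimage_ClopSUp (V : set Y) : ClopSUp V -> ClopSUp (f @^-1` V).
Proof.
move=> [cV [_ uV mV]]; split; first exact: preimage_clopen.
split; first by case: (preimage_clopen cV cf).
  by move=> x y Vx xy; apply: uV Vx _; exact: of_.
move=> m [Vm minm].
have /mV[o c] : minimals V (f m).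
  split => // z Vz zm; have e : g z = m.
    by apply: minm; [rewrite /= gK|rewrite -(fK m); exact: og].
  by rewrite -e gK.
rewrite /spatial_part /=; have -> : downset_of [set m] = f @^-1` downset_of [set f m].
  apply/seteqP; split; first by move=> y [_ -> ym]; exists (f m) => //; exact: of_.
  by move=> y [_ -> ym]; exists m => //; rewrite -(fK y) -(fK m); exact: og.
exact: preimage_clopen.
Qed.

Lemma order_homeomorphism_coherent : coherent_L_morphism f.
Proof.
split; first by split => // U _ _; exact: homeo_preimage_closure.
move=> U _ x [V [csV VU] Vx]; exists (f @^-1` V) => //.
by split; [exact: homeo_preimage_ClopSUp|move=> y /VU].
Qed.

End OrderHomeomorphism.

(** * Prime filters of a frame *)

Section FrameFacts.
Variable L : frame.
Implicit Types (a b c d x y : L) (S T A B F G I P : set L).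

Definition fbot : L := fjoin set0.
Definition fjoin2 a b : L := fjoin [set a; b].
Definition fimp a b : L := fjoin [set c | fle (fmeet c a) b].

Lemma fle_fmeetE a b : fle a b -> fmeet a b = a.
Proof.
move=> ab; apply: fle_anti; first exact: fmeet_lbl.
by apply: fmeet_greatest ab; exact: fle_refl.
Qed.

Lemma fmeetC a b : fmeet a b = fmeet b a.
Proof. by apply: fle_anti; apply: fmeet_greatest; (exact: fmeet_lbl || exact: fmeet_lbr). Qed.

Lemma fmeetSl a b c : fle a b -> fle (fmeet a c) (fmeet b c).
Proof.
move=> ab; apply: fmeet_greatest; last exact: fmeet_lbr.
exact: fle_trans (fmeet_lbl _ _) ab.
Qed.

Lemma fbot_le a : fle fbot a.
Proof. by apply: fjoin_least => s []. Qed.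

Lemma fjoin2_ubl a b : fle a (fjoin2 a b). Proof. by apply: fjoin_ub; left. Qed.
Lemma fjoin2_ubr a b : fle b (fjoin2 a b). Proof. by apply: fjoin_ub; right. Qed.

Lemma fjoin2_least a b c : fle a c -> fle b c -> fle (fjoin2 a b) c.
Proof. by move=> ac bc; apply: fjoin_least => s [->|->]. Qed.

Lemma fjoinS S T : S `<=` T -> fle (fjoin S) (fjoin T).
Proof. by move=> ST; apply: fjoin_least => s /ST; exact: fjoin_ub. Qed.

Lemma fmeet_fjoin2 c a b : fmeet c (fjoin2 a b) = fjoin2 (fmeet c a) (fmeet c b).
Proof.
rewrite /fjoin2 frame_distr; congr fjoin; apply/seteqP; split.
  by move=> _ [s [->|->] <-]; [left|right].
by move=> _ [->|->]; [exists a; [left|]|exists b; [right|]].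
Qed.

Lemma fimp_intro c a b : fle (fmeet c a) b -> fle c (fimp a b).
Proof. by move=> h; apply: fjoin_ub. Qed.

Lemma fimp_elim a b : fle (fmeet (fimp a b) a) b.
Proof.
by rewrite fmeetC /fimp frame_distr; apply: fjoin_least => _ [c hc <-]; rewrite fmeetC.
Qed.

Definition lattice_filter F : Prop :=
  [/\ F (ftop L), (forall a b, F a -> fle a b -> F b) &
      (forall a b, F a -> F b -> F (fmeet a b))].

Definition lattice_ideal I : Prop :=
  [/\ I fbot, (forall a b, I b -> fle a b -> I a) &
      (forall a b, I a -> I b -> I (fjoin2 a b))].

Definition prime_filter P : Prop :=
  [/\ P (ftop L), ~ P fbot, (forall a b, P a -> fle a b -> P b),
      (forall a b, P a -> P b -> P (fmeet a b)) &
      (forall a b, P (fjoin2 a b) -> P a \/ P b)].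

Lemma principal_filter a : lattice_filter [set x | fle a x].
Proof.
split; [exact: ftop_greatest|exact: fle_trans|].
by move=> x y ax ay; exact: fmeet_greatest.
Qed.

Lemma principal_ideal b : lattice_ideal [set x | fle x b].
Proof.
split; [exact: fbot_le|by move=> x y yb xy; exact: fle_trans xy yb|].
by move=> x y; exact: fjoin2_least.
Qed.

Lemma prime_filter_lattice_filter P : prime_filter P -> lattice_filter P.
Proof. by case. Qed.

Lemma lattice_filter_adjoin G a :
  lattice_filter G -> lattice_filter [set x | exists2 g, G g & fle (fmeet g a) x].
Proof.
move=> [Gt Gu Gm]; split.
- by exists (ftop L) => //; exact: ftop_greatest.
- by move=> x y [g Gg h] xy; exists g => //; exact: fle_trans h xy.
- move=> x y [g1 G1 h1] [g2 G2 h2]; exists (fmeet g1 g2); first exact: Gm.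
  apply: fmeet_greatest; [apply: fle_trans h1|apply: fle_trans h2];
    apply: fmeetSl; [exact: fmeet_lbl|exact: fmeet_lbr].
Qed.

Section PrimeFilterTheorem.
Variables F0 I : set L.

Definition filter_avoiding A := [/\ lattice_filter A, F0 `<=` A & forall x, A x -> ~ I x].

Hypotheses (hF0 : lattice_filter F0) (hI : lattice_ideal I).
Hypothesis F0I : forall x, F0 x -> ~ I x.

Lemma filter_avoiding_chain_bigcup (C : set (set L)) :
  total_on C subset -> (forall A, C A -> filter_avoiding A) -> C !=set0 ->
  filter_avoiding (\bigcup_(A in C) A).
Proof.
move=> totC hC [A0 CA0]; have [[A0t _ _] F0A0 _] := hC _ CA0.
split; [split| |].
- by exists A0.
- by move=> a b [A CA Aa] ab; exists A => //; have [[_ uA _] _ _] := hC _ CA; exact: uA ab.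
- move=> a b [A1 C1 A1a] [A2 C2 A2b].
  have [[_ _ m1] _ _] := hC _ C1; have [[_ _ m2] _ _] := hC _ C2.
  case: (totC _ _ C1 C2) => [s12|s21].
    by exists A2 => //; apply: m2 => //; exact: s12.
  by exists A1 => //; apply: m1 => //; exact: s21.
- by move=> x /F0A0 A0x; exists A0.
- by move=> x [A CA]; have [_ _ AI] := hC _ CA; exact: AI.
Qed.

Lemma maximal_filter_avoiding_exists :
  exists2 A, filter_avoiding A & forall B, A `<` B -> ~ filter_avoiding B.
Proof.
have [|A [PA maxA]] := @Zorn_bigcup _ [set A | A = set0 \/ filter_avoiding A].
  move=> C CP totC; have [[A CA hA]|nA] := pselect (exists2 A, C A & filter_avoiding A).
    right; have -> : \bigcup_(B in C) B = \bigcup_(B in C `&` filter_avoiding) B.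
      apply/seteqP; split=> x [B CB Bx]; last by exists B => //; case: CB.
      by exists B => //; split => //; case: (CP _ CB) => // B0; rewrite B0 in Bx.
    apply: filter_avoiding_chain_bigcup; [|by move=> B []|by exists A].
    by move=> B1 B2 [C1 _] [C2 _]; exact: totC.
  left; apply/seteqP; split => // x [B CB Bx].
  by case: (CP B CB) => [e|hB]; [rewrite e in Bx|case: nA; exists B].
have hA : filter_avoiding A.
  case: PA => // A0; exfalso; apply: (maxA F0); last by right; split.
  by rewrite A0; split => // /(_ (ftop L)); apply; case: hF0.
by exists A => // B AB hB; apply: maxA AB _; right.
Qed.

Lemma maximal_filter_avoiding_extend A d :
  filter_avoiding A -> (forall B, A `<` B -> ~ filter_avoiding B) -> ~ A d ->
  exists c x, [/\ A c, I x & fle (fmeet c d) x].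
Proof.
move=> [fA F0A AI] maxA nAd; apply: contrapT => nex.
apply: (maxA [set x | exists2 c, A c & fle (fmeet c d) x]).
  split; first by move=> x Ax; exists x => //; exact: fmeet_lbl.
  by move=> sub; apply: nAd; apply: sub; exists (ftop L); [case: fA|exact: fmeet_lbr].
split; first exact: lattice_filter_adjoin.
- by move=> x /F0A Ax; exists x => //; exact: fmeet_lbl.
- by move=> x [c Ac cx] Ix; apply: nex; exists c, x.
Qed.

Lemma maximal_filter_avoiding_prime A :
  filter_avoiding A -> (forall B, A `<` B -> ~ filter_avoiding B) -> prime_filter A.
Proof.
move=> hA maxA; have [[At Au Am] _ AI] := hA; have [Ib Id Ij] := hI.
split => //; first by move=> /AI.
move=> a b Aab; apply: contrapT => /not_orP[na nb].
have [c1 [x1 [A1 I1 h1]]] := maximal_filter_avoiding_extend hA maxA na.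
have [c2 [x2 [A2 I2 h2]]] := maximal_filter_avoiding_extend hA maxA nb.
apply: (AI (fmeet (fmeet c1 c2) (fjoin2 a b))); first by apply: (Am) => //; exact: (Am).
apply: (Id _ (fjoin2 x1 x2)); first exact: Ij.
rewrite fmeet_fjoin2; apply: fjoin2_least.
  apply: fle_trans (fjoin2_ubl _ _); apply: fle_trans h1; apply: fmeetSl; exact: fmeet_lbl.
apply: fle_trans (fjoin2_ubr _ _); apply: fle_trans h2; apply: fmeetSl; exact: fmeet_lbr.
Qed.

Lemma prime_filter_theorem :
  exists P, [/\ prime_filter P, F0 `<=` P & forall x, P x -> ~ I x].
Proof.
have [A hA maxA] := maximal_filter_avoiding_exists.
exists A; have [_ F0A AI] := hA; split => //; exact: maximal_filter_avoiding_prime.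
Qed.

End PrimeFilterTheorem.

Lemma prime_filter_separation a b : ~ fle a b -> exists P, [/\ prime_filter P, P a & ~ P b].
Proof.
move=> nab.
have [|P [pP aP Pb]] := prime_filter_theorem (principal_filter a) (principal_ideal b).
  by move=> x ax xb; apply: nab; exact: fle_trans ax xb.
by exists P; split => //; [exact: aP (fle_refl a)|move=> /Pb; apply; exact: fle_refl].
Qed.

Lemma prime_filters_fle a b : (forall P, prime_filter P -> P a -> P b) -> fle a b.
Proof.
move=> h; apply: contrapT => /prime_filter_separation[P [pP Pa nPb]].
by apply: nPb; exact: h.
Qed.

Lemma prime_filter_fimp G a b : prime_filter G -> ~ G (fimp a b) ->
  exists H, [/\ prime_filter H, G `<=` H, H a & ~ H b].
Proof.
move=> pG nG; have [Gt _ Gu _ _] := pG.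
have [|P [pP sub Pb]] := prime_filter_theorem
    (lattice_filter_adjoin a (prime_filter_lattice_filter pG)) (principal_ideal b).
  move=> x [g Gg h] xb; apply: nG; apply: Gu Gg _.
  by apply: fimp_intro; exact: fle_trans h xb.
exists P; split => //.
- by move=> g Gg; apply: sub; exists g => //; exact: fmeet_lbl.
- by apply: sub; exists (ftop L) => //; exact: fmeet_lbr.
- by move=> /Pb; apply; exact: fle_refl.
Qed.

Lemma prime_filter_finite_fjoin P T : prime_filter P -> finite_set T ->
  P (fjoin T) -> exists2 t, T t & P t.
Proof.
move=> [_ Pb Pu _ Pp] fT; pattern T; apply: (finite_set_ind _ _ fT) => [/Pb//|t T' IH PtT'].
have /Pp[Pt|/IH[s T's Ps]] : P (fjoin2 t (fjoin T')).
  apply: Pu PtT' _; apply: fjoin_least => s [->|T's]; first exact: fjoin2_ubl.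
  exact: fle_trans (fjoin_ub T's) (fjoin2_ubr _ _).
- by exists t => //; left.
- by exists s => //; right.
Qed.

Lemma prime_filter_ideal_above P S : prime_filter P ->
  lattice_ideal [set x | exists2 b, ~ P b & fle x (fjoin (b |` S))].
Proof.
move=> [_ Pb _ _ Pp].
have mono b b' : fle b b' -> fle (fjoin (b |` S)) (fjoin (b' |` S)).
  move=> bb'; apply: fjoin_least => s [->|Ss]; last by apply: fjoin_ub; right.
  by apply: fle_trans bb' _; apply: fjoin_ub; left.
split.
- by exists fbot => //; exact: fbot_le.
- by move=> x y [b nb yb] xy; exists b => //; exact: fle_trans xy yb.
- move=> x y [b1 n1 h1] [b2 n2 h2]; exists (fjoin2 b1 b2); first by case/Pp.
  by apply: fjoin2_least; [apply: fle_trans h1 _|apply: fle_trans h2 _]; apply: mono;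
    [exact: fjoin2_ubl|exact: fjoin2_ubr].
Qed.

Lemma minimal_prime_filter_completely_prime P k : prime_filter P -> fcompact k -> P k ->
  (forall Q, prime_filter Q -> Q k -> Q `<=` P -> Q = P) ->
  forall S, P (fjoin S) -> exists2 s, S s & P s.
Proof.
(* Otherwise some prime filter above [k] avoids the ideal of the elements below
   [fjoin (b |` S)] with [b \notin P]; it lies strictly below [P]. *)
move=> pP ck Pk minP S PS; apply: contrapT => nS; have [_ _ Pu _ _] := pP.
have [|Q [pQ kQ QI]] := prime_filter_theorem (principal_filter k)
    (prime_filter_ideal_above S pP).
  move=> x kx [b nb xb]; have [T [fT TS kT]] := ck _ (fle_trans kx xb).
  have [t Tt Pt] := prime_filter_finite_fjoin pP fT (Pu _ _ Pk kT).
  by case: (TS t Tt) => [e|St]; [apply: nb; rewrite -e|apply: nS; exists t].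
have QP : Q `<=` P.
  move=> x Qx; apply: contrapT => nx; apply: (QI x Qx).
  by exists x => //; apply: fjoin_ub; left.
rewrite -(minP Q pQ (kQ _ (fle_refl k)) QP) in PS.
by apply: (QI _ PS); exists fbot; [case: pP|apply: fjoinS => s Ss; right].
Qed.

End FrameFacts.

Section FrameHomFacts.
Variables (L M : frame) (h : L -> M).
Hypothesis hh : frame_hom h.

Lemma frame_hom_mono a b : fle a b -> fle (h a) (h b).
Proof. by move=> ab; have [hm _ _] := hh; rewrite -(fle_fmeetE ab) hm; exact: fmeet_lbr. Qed.

Lemma frame_hom_fbot : h (fbot L) = fbot M.
Proof. by have [_ _ hj] := hh; rewrite /fbot hj image_set0. Qed.

Lemma frame_hom_fjoin2 a b : h (fjoin2 a b) = fjoin2 (h a) (h b).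
Proof.
have [_ _ hj] := hh; rewrite /fjoin2 hj; congr fjoin; apply/seteqP; split.
  by move=> _ [s [->|->] <-]; [left|right].
by move=> _ [->|->]; [exists a; [left|]|exists b; [right|]].
Qed.

End FrameHomFacts.

Section FrameIsomorphisms.
Variables (L M : frame) (h : L -> M) (g : M -> L).
Hypotheses (hh : frame_hom h) (hK : cancel h g) (gK : cancel g h).

Lemma frame_hom_inverse : frame_hom g.
Proof.
have [hm ht hj] := hh; split.
- by move=> a b; rewrite -{1}(gK a) -{1}(gK b) -hm hK.
- by rewrite -ht hK.
move=> S; have eS : h @` (g @` S) = S.
  apply/seteqP; split; first by move=> _ [_ [s Ss <-] <-]; rewrite gK.
  by move=> s Ss; exists (g s); [exists s|rewrite gK].
by rewrite -{1}eS -hj hK.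
Qed.

Lemma frame_iso_compact k : fcompact k -> fcompact (h k).
Proof.
move=> ck S hS; have [_ _ hj] := hh; have [_ _ gj] := frame_hom_inverse.
have [|T [fT TS kT]] := ck (g @` S).
  by rewrite -(hK k) -gj; exact: frame_hom_mono frame_hom_inverse _ _ hS.
exists (h @` T); split; first exact: finite_image.
  by move=> _ [t /TS[s Ss <-] <-]; rewrite gK.
by rewrite -hj; exact: frame_hom_mono.
Qed.

End FrameIsomorphisms.

Lemma frame_iso_coherent (L M : frame) (h : L -> M) (g : M -> L) :
  frame_hom h -> cancel h g -> cancel g h ->
  coherent_frame_hom h /\ coherent_frame_hom g.
Proof.
move=> hh hK gK; have hg := frame_hom_inverse hh hK gK.
by split; split => //; apply: frame_iso_compact.
Qed.

(** * The space of prime filters *)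

Record pfilter (L : frame) := PFilter { pfset : set L; pfsetP : prime_filter pfset }.

HB.instance Definition _ (L : frame) := gen_eqMixin (pfilter L).
HB.instance Definition _ (L : frame) := gen_choiceMixin (pfilter L).

Lemma pfset_inj (L : frame) : injective (@pfset L).
Proof.
move=> P Q; case: P Q => [P pP] [Q pQ] /= ePQ; subst Q.
by congr PFilter; exact: Prop_irrelevance.
Qed.

(* The patch topology: its basic opens are the sets of prime filters containing
   [a] and omitting [b]. *)
Definition pfilter_open (L : frame) (A : set (pfilter L)) : Prop :=
  forall P, A P -> exists a b,
    [/\ pfset P a, ~ pfset P b & forall Q, pfset Q a -> ~ pfset Q b -> A Q].

Lemma pfilter_openT (L : frame) : pfilter_open [set: pfilter L].
Proof. by move=> P _; exists (ftop L), (fbot L); case: (pfsetP P). Qed.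

Lemma pfilter_openI (L : frame) : setI_closed (@pfilter_open L).
Proof.
move=> A B oA oB P [AP BP].
have [a1 [b1 [P1 nP1 h1]]] := oA P AP; have [a2 [b2 [P2 nP2 h2]]] := oB P BP.
have [_ _ Pu Pm Pp] := pfsetP P.
exists (fmeet a1 a2), (fjoin2 b1 b2); split; [exact: Pm|by case/Pp|].
move=> Q Qa Qb; have [_ _ Qu _ _] := pfsetP Q; split.
  apply: h1 => [|hb]; first exact: Qu Qa (fmeet_lbl _ _).
  by apply: Qb; exact: Qu hb (fjoin2_ubl _ _).
by apply: h2 => [|hb]; [exact: Qu Qa (fmeet_lbr _ _)|apply: Qb; exact: Qu hb (fjoin2_ubr _ _)].
Qed.

Lemma pfilter_open_bigcup (L : frame) (I : Type) (f : I -> set (pfilter L)) :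
  (forall i, pfilter_open (f i)) -> pfilter_open (\bigcup_i f i).
Proof.
move=> h P [i _ fiP]; have [a [b [Pa nPb hab]]] := h i P fiP.
by exists a, b; split => // Q Qa Qb; exists i => //; exact: hab.
Qed.

HB.instance Definition _ (L : frame) :=
  isOpenTopological.Build (pfilter L) (@pfilter_openT L) (@pfilter_openI L)
    (@pfilter_open_bigcup L).

Section PrimeFilterSpace.
Variable L : frame.
Implicit Types (a b c k : L) (P Q : pfilter L).

Lemma pfilter_openE (A : set (pfilter L)) : open A = pfilter_open A.
Proof. by []. Qed.

Lemma pfset_le_refl P : pfset P `<=` pfset P. Proof. by []. Qed.

Lemma pfset_le_anti P Q : pfset P `<=` pfset Q -> pfset Q `<=` pfset P -> P = Q.
Proof. by move=> PQ QP; apply: pfset_inj; apply/seteqP. Qed.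

Lemma pfset_le_trans P Q (R : pfilter L) :
  pfset P `<=` pfset Q -> pfset Q `<=` pfset R -> pfset P `<=` pfset R.
Proof. by move=> PQ QR x /PQ /QR. Qed.

Definition pf_space : otop :=
  @OTop (pfilter L) (fun P Q => pfset P `<=` pfset Q)
    pfset_le_refl pfset_le_anti pfset_le_trans.

Definition stone a : set pf_space := [set P | pfset P a].

Lemma stone_fmeet a b : stone (fmeet a b) = stone a `&` stone b.
Proof.
apply/seteqP; split => P; have [_ _ Pu Pm _] := pfsetP P; last by move=> [Pa Pb]; exact: Pm.
by move=> Pab; split; [exact: Pu Pab (fmeet_lbl _ _)|exact: Pu Pab (fmeet_lbr _ _)].
Qed.

Lemma stone_fjoin2 a b : stone (fjoin2 a b) = stone a `|` stone b.
Proof.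
apply/seteqP; split => P; have [_ _ Pu _ Pp] := pfsetP P; first exact: Pp.
by move=> [Pa|Pb]; [exact: Pu Pa (fjoin2_ubl _ _)|exact: Pu Pb (fjoin2_ubr _ _)].
Qed.

Lemma stone_ftop : stone (ftop L) = setT.
Proof. by apply/seteqP; split => // P _; case: (pfsetP P). Qed.

Lemma stone_fbot : stone (fbot L) = set0.
Proof. by apply/seteqP; split => // P; case: (pfsetP P). Qed.

Lemma stone_open a : open (stone a).
Proof. by move=> P Pa; exists a, (fbot L); split => //; case: (pfsetP P). Qed.

Lemma stoneC_open a : open (~` stone a).
Proof. by move=> P nPa; exists (ftop L), a; split => //; case: (pfsetP P). Qed.

Lemma stone_clopen a : clopen (stone a).
Proof. by split; [exact: stone_open|rewrite -[stone a]setCK closedC; exact: stoneC_open]. Qed.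

Lemma stone_ClopUp a : ClopUp (stone a).
Proof. by split; [exact: stone_clopen|move=> P Q Pa PQ; exact: PQ]. Qed.

Lemma stone_fle a b : stone a `<=` stone b -> fle a b.
Proof. by move=> ab; apply: prime_filters_fle => P pP Pa; exact: (ab (PFilter pP)). Qed.

Lemma fle_stone a b : fle a b -> stone a `<=` stone b.
Proof. by move=> ab P Pa; have [_ _ Pu _ _] := pfsetP P; exact: Pu Pa ab. Qed.

Lemma stone_inj : injective stone.
Proof. by move=> a b e; apply: fle_anti; apply: stone_fle; rewrite e. Qed.

Lemma pf_space_nbhs P (B : set pf_space) : open B -> B P ->
  exists a b, [/\ pfset P a, ~ pfset P b & stone a `\` stone b `<=` B].
Proof.
by move=> oB /oB[a [b [Pa nPb h]]]; exists a, b; split => // Q [Qa Qb]; exact: h.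
Qed.

Lemma pf_space_compact : compact [set: pf_space].
Proof.
rewrite compact_ultra => F UF _.
have pF : prime_filter [set a | F (stone a)].
  split.
  - by rewrite /= stone_ftop; exact: filterT.
  - by rewrite /= stone_fbot => /filter_ex[].
  - by move=> a b Fa ab; apply: filterS Fa; exact: fle_stone.
  - by move=> a b Fa Fb; rewrite /= stone_fmeet; exact: filterI.
  move=> a b; rewrite /= stone_fjoin2 => Fab.
  case: (in_ultra_setVsetC (stone a) UF) => [|Fna]; first by left.
  case: (in_ultra_setVsetC (stone b) UF) => [|Fnb]; first by right.
  have : F ((stone a `|` stone b) `&` (~` stone a `&` ~` stone b)).
    by apply: filterI => //; exact: filterI.
  by move=> /filter_ex[P [[Pa|Pb] [nPa nPb]]].
exists (PFilter pF); split => // B; rewrite nbhsE => -[B' [oB' B'P] sB].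
have [a [b [Fa nFb sub]]] := pf_space_nbhs oB' B'P.
apply: filterS sB _; apply: filterS sub _.
case: (in_ultra_setVsetC (stone b) UF) => Fb; first by case: nFb.
exact: filterI.
Qed.

Lemma pf_space_separate_points (P Q : pf_space) : P <> Q ->
  exists a, (pfset P a /\ ~ pfset Q a) \/ (pfset Q a /\ ~ pfset P a).
Proof.
move=> nPQ; apply: contrapT => h; apply: nPQ; apply: pfset_le_anti => a Pa.
  by apply: contrapT => nQa; apply: h; exists a; left.
by apply: contrapT => nPa; apply: h; exists a; right.
Qed.

Lemma pf_space_zero_dimensional : zero_dimensional pf_space.
Proof.
move=> P Q /eqP/pf_space_separate_points[a [[Pa nQa]|[Qa nPa]]].
  by exists (stone a); split => //; exact: stone_clopen.
by exists (~` stone a); split => //; exact: clopenC (stone a) (stone_clopen a).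
Qed.

Lemma pf_space_hausdorff : hausdorff_space pf_space.
Proof.
rewrite open_hausdorff => P Q /eqP/pf_space_separate_points[a [[Pa nQa]|[Qa nPa]]].
  exists (stone a, ~` stone a); first by split; apply/mem_set.
  by split; [exact: stone_open|exact: stoneC_open|apply/eqP/seteqP; split => // ? []].
exists (~` stone a, stone a); first by split; apply/mem_set.
by split; [exact: stoneC_open|exact: stone_open|apply/eqP/seteqP; split => // ? []].
Qed.

Lemma pf_space_priestley : priestley_space pf_space.
Proof.
split; first split; [exact: pf_space_compact|exact: pf_space_hausdorff|
  exact: zero_dimension_totally_disconnected pf_space_zero_dimensional|].
move=> P Q nPQ; have [a Pa nQa] : exists2 a, pfset P a & ~ pfset Q a.
  apply: contrapT => h; apply: nPQ => a Pa; apply: contrapT => nQa.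
  by apply: h; exists a.
by exists (stone a); have [] := stone_ClopUp a.
Qed.

Lemma pf_space_downset_open (A : set pf_space) : open A -> open (downset_of A).
Proof.
(* [downset_of (stone a `\` stone b)] is the open set [~` stone (fimp a b)]. *)
move=> oA; rewrite pfilter_openE => P [Q AQ PQ].
have [a [b [Qa nQb sub]]] := pf_space_nbhs oA AQ.
have nPab : ~ pfset P (fimp a b).
  move=> Pab; have [_ _ Qu Qm _] := pfsetP Q.
  by apply: nQb; apply: Qu (fimp_elim a b); apply: Qm => //; exact: PQ.
exists (ftop L), (fimp a b); split => //; first by case: (pfsetP P).
move=> R _ nRab; have [S [pS RS Sa nSb]] := prime_filter_fimp (pfsetP R) nRab.
by exists (PFilter pS); [exact: sub|].
Qed.

Lemma open_upset_stone (U : set pf_space) P : open U -> upset U -> U P ->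
  exists2 a, pfset P a & stone a `<=` U.
Proof.
move=> oU uU UP; apply: contrapT => nex; have [Pt _ _ Pm _] := pfsetP P.
have [Q _ hQ] : exists2 Q, [set: pf_space] Q &
    forall C, [set stone a `&` ~` U | a in pfset P] C -> C Q.
  apply: compact_filtered_closed_inter pf_space_compact _ _ _ _.
  - move=> _ [a _ <-]; apply: closedI; first by case: (stone_clopen a).
    exact: open_closedC.
  - by exists (stone (ftop L) `&` ~` U), (ftop L).
  - move=> _ _ [a1 P1 <-] [a2 P2 <-]; exists (stone (fmeet a1 a2) `&` ~` U).
      by exists (fmeet a1 a2) => //; exact: Pm.
    by rewrite stone_fmeet => R [[R1 R2] nR].
  move=> _ [a Pa <-]; apply/set0P/negP => /eqP e; apply: nex; exists a => // R Ra.
  by apply: contrapT => nR; have : (setT `&` (stone a `&` ~` U)) R by []; rewrite e.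
have PQ : pfset P `<=` pfset Q.
  by move=> a Pa; have [] := hQ (stone a `&` ~` U) (ex_intro2 _ _ a Pa erefl).
have [_] := hQ (stone (ftop L) `&` ~` U) (ex_intro2 _ _ (ftop L) Pt erefl).
by apply; exact: uU UP PQ.
Qed.

Lemma open_upsetE (U : set pf_space) : open U -> upset U ->
  U = \bigcup_(a in [set a | stone a `<=` U]) stone a.
Proof.
move=> oU uU; apply/seteqP; split => [P UP|P [a sub Pa]]; last exact: sub.
by have [a Pa sub] := open_upset_stone oU uU UP; exists a.
Qed.

Lemma closure_bigcup_stone (S : set L) :
  closure (\bigcup_(a in S) stone a) = stone (fjoin S).
Proof.
apply/seteqP; split.
  rewrite -[X in _ `<=` X]closed_closureE; last by case: (stone_clopen (fjoin S)).
  by apply: closureS => P [a Sa Pa]; apply: fle_stone Pa; exact: fjoin_ub.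
move=> P PS; apply/closureP => B oB BP; have [_ _ Pu Pm _] := pfsetP P.
have [c [d [Pc nPd sub]]] := pf_space_nbhs oB BP.
have [s Ss ncsd] : exists2 s, S s & ~ fle (fmeet c s) d.
  apply: contrapT => nex; apply: nPd; apply: Pu (Pm _ _ Pc PS) _.
  rewrite frame_distr; apply: fjoin_least => _ [s Ss <-].
  by apply: contrapT => h; apply: nex; exists s.
have [Q [pQ Qcs nQd]] := prime_filter_separation ncsd; have [_ _ Qu _ _] := pQ.
exists (PFilter pQ); split; first by exists s => //; exact: Qu Qcs (fmeet_lbr _ _).
by apply: sub; split => //; exact: Qu Qcs (fmeet_lbl _ _).
Qed.

Lemma pf_space_L_space : L_space pf_space.
Proof.
split; first exact: pf_space_priestley.
  move=> U [oU cU]; split; first exact: pf_space_downset_open.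
  exact: priestley_downset_closed pf_space_priestley _ cU.
by move=> U oU uU; rewrite (open_upsetE oU uU) closure_bigcup_stone; exact: stone_open.
Qed.

Lemma ClopUp_stone (U : set pf_space) : ClopUp U -> exists a, U = stone a.
Proof.
move=> [[oU cU] uU]; exists (fjoin [set a | stone a `<=` U]).
by rewrite -closure_bigcup_stone -(open_upsetE oU uU) closed_closureE.
Qed.

Lemma completely_prime_spatial (P : pf_space) :
  (forall S, pfset P (fjoin S) -> exists2 s, S s & pfset P s) -> spatial_part P.
Proof.
move=> cpP; rewrite /spatial_part /=.
have -> : downset_of [set P] = ~` stone (fjoin (~` pfset P)).
  apply/seteqP; split => [Q [_ -> QP] /QP/cpP[s ns Ps] //|Q nQ].
  exists P => // a Qa; apply: contrapT => nPa; apply: nQ.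
  by have [_ _ Qu _ _] := pfsetP Q; apply: Qu Qa _; exact: fjoin_ub.
exact: clopenC (stone (fjoin (~` pfset P))) (stone_clopen _).
Qed.

Lemma stone_ClopSUp k : fcompact k -> ClopSUp (stone k).
Proof.
move=> ck; split; first exact: stone_clopen.
split; [by case: (stone_clopen k)|by case: (stone_ClopUp k)|].
move=> P [Pk minP]; apply: completely_prime_spatial.
apply: minimal_prime_filter_completely_prime (pfsetP P) ck Pk _ => Q pQ Qk QP.
by have /(congr1 (@pfset L)) := minP (PFilter pQ) Qk QP.
Qed.

Lemma pf_space_algebraic : algebraic_frame L -> algebraic_L_space pf_space.
Proof.
move=> hA; split => [|U /ClopUp_stone[a ->]]; first exact: pf_space_L_space.
rewrite {1}(hA a) -closure_bigcup_stone; apply: closureS => P [b [cb ba] Pb].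
by exists (stone b) => //; split; [exact: stone_ClopSUp|exact: fle_stone].
Qed.

End PrimeFilterSpace.

Section StoneRepresentation.
Variables (L : frame) (hL : L_space (pf_space L)).

Definition stone_clopup (a : L) : clopup_frame hL := exist _ (stone a) (stone_ClopUp a).

Lemma stone_clopup_hom : frame_hom stone_clopup.
Proof.
split=> [a b||S]; apply: proj1_sig_inj => /=; [exact: stone_fmeet|exact: stone_ftop|].
rewrite -closure_bigcup_stone; congr closure; apply/seteqP; split => P.
  by move=> [a Sa Pa]; exists (stone_clopup a) => //; exists a.
by move=> [_ [a Sa <-] Pa]; exists a.
Qed.

Definition stone_clopup_inv (U : clopup_frame hL) : L :=
  proj1_sig (cid (ClopUp_stone (proj2_sig U))).

Lemma stone_clopup_invE (U : clopup_frame hL) : proj1_sig U = stone (stone_clopup_inv U).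
Proof. exact: proj2_sig (cid (ClopUp_stone (proj2_sig U))). Qed.

Lemma stone_clopupK : cancel stone_clopup stone_clopup_inv.
Proof. by move=> a; apply: stone_inj; rewrite -stone_clopup_invE. Qed.

Lemma stone_clopup_invK : cancel stone_clopup_inv stone_clopup.
Proof. by move=> U; apply: proj1_sig_inj; rewrite /= -stone_clopup_invE. Qed.

Lemma stone_clopup_coherent :
  coherent_frame_hom stone_clopup /\ coherent_frame_hom stone_clopup_inv.
Proof. exact: frame_iso_coherent stone_clopup_hom stone_clopupK stone_clopup_invK. Qed.

Lemma ClopSUp_stone_compact (k : L) : ClopSUp (stone k) -> fcompact k.
Proof.
move=> /(@ClopSUp_compact _ hL (stone_clopup k)) ck.
by have := proj2 (proj2 stone_clopup_coherent) _ ck; rewrite stone_clopupK.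
Qed.

End StoneRepresentation.

Lemma preimage_prime_filter (L M : frame) (h : L -> M) (P : set M) :
  frame_hom h -> prime_filter P -> prime_filter (h @^-1` P).
Proof.
move=> hh [Pt Pb Pu Pm Pp]; have [hm ht _] := hh; split.
- by rewrite /preimage /= ht.
- by rewrite /preimage /= (frame_hom_fbot hh).
- by move=> a b Pa ab; apply: Pu Pa _; exact: frame_hom_mono.
- by move=> a b Pa Pb'; rewrite /preimage /= hm; exact: Pm.
- by move=> a b; rewrite /preimage /= (frame_hom_fjoin2 hh); exact: Pp.
Qed.

Section PrimeFilterPreimage.
Variables (L M : frame) (h : L -> M).
Hypothesis hc : coherent_frame_hom h.

Definition pf_preimage (P : pf_space M) : pf_space L :=
  PFilter (preimage_prime_filter (proj1 hc) (pfsetP P)).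

Lemma pf_preimage_L_morphism : L_morphism pf_preimage.
Proof.
split => [||U oU uU].
- apply/continuousP => A; rewrite !pfilter_openE => oA P /oA[a [b [Pa nPb hab]]].
  by exists (h a), (h b); split => // Q Qa Qb; exact: hab.
- by move=> P Q PQ a; exact: PQ.
have [_ _ hj] := proj1 hc.
rewrite (open_upsetE oU uU) closure_bigcup_stone.
have -> : pf_preimage @^-1` (\bigcup_(a in [set a | stone a `<=` U]) stone a) =
          \bigcup_(b in h @` [set a | stone a `<=` U]) stone b.
  apply/seteqP; split => P; first by move=> [a Sa Pa]; exists (h a) => //; exists a.
  by move=> [_ [a Sa <-] Pa]; exists a.
by rewrite closure_bigcup_stone -hj.
Qed.

Lemma pf_preimage_coherent : coherent_L_morphism pf_preimage.
Proof.
split=> [|U _ P [V [csV VU] VP]]; first exact: pf_preimage_L_morphism.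
have [k ek] := ClopUp_stone (ClopUp_of_ClopSUp csV); subst V.
have ck := ClopSUp_stone_compact (pf_space_L_space L) csV.
exists (stone (h k)) => //; split; first exact: stone_ClopSUp (proj2 hc k ck).
by move=> Q Qk; apply: VU.
Qed.

End PrimeFilterPreimage.

Section PointFilters.
Variables (X : otop) (hL : L_space X).
Let hP := L_space_priestley hL.
Local Notation CU := (clopup_frame hL).

Lemma clopup_fbotE : proj1_sig (fbot CU) = set0.
Proof. by rewrite /= bigcup_set0 closure0. Qed.

Lemma clopup_fjoin2E (U V : CU) :
  proj1_sig (fjoin2 U V) = proj1_sig U `|` proj1_sig V.
Proof.
rewrite /=; have -> : \bigcup_(s in [set U; V]) proj1_sig s = proj1_sig U `|` proj1_sig V.
  apply/seteqP; split => [x [s [->|->] sx]|x [Ux|Vx]]; [by left|by right| |].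
  - by exists U => //; left.
  - by exists V => //; right.
by apply: closed_closureE; apply: closedU; exact: clopup_closed.
Qed.

Lemma point_prime_filter (x : X) : prime_filter [set U : CU | proj1_sig U x].
Proof.
split => //.
- by move=> h; suff : (set0 : set X) x by []; rewrite -clopup_fbotE.
- by move=> a b ax ab; exact: ab.
- move=> a b h.
  by have : (proj1_sig a `|` proj1_sig b) x by rewrite -clopup_fjoin2E.
Qed.

Definition point_pfilter (x : X) : pf_space CU := PFilter (point_prime_filter x).

Lemma point_pfilter_reflect x y :
  pfset (point_pfilter x) `<=` pfset (point_pfilter y) -> ole x y.
Proof.
move=> h; apply: contrapT => /(priestley_separation hP)[U [cU Ux nUy]].
by apply: nUy; exact: (h (exist _ U cU)).
Qed.

Lemma point_pfilter_inj : injective point_pfilter.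
Proof. by move=> x y e; apply: ole_anti; apply: point_pfilter_reflect; rewrite e. Qed.

Lemma point_pfilter_order_preserving : order_preserving point_pfilter.
Proof. by move=> x y xy U Ux; exact: clopup_upset U _ _ Ux xy. Qed.

Lemma point_pfilter_continuous : continuous point_pfilter.
Proof.
apply/continuousP => A; rewrite pfilter_openE => oA; apply: open_locally => x /oA.
move=> [a [b [ax nbx hab]]]; exists (proj1_sig a `&` ~` proj1_sig b); last first.
  by move=> y [ay nby]; exact: hab.
split=> //; apply: openI; first exact: clopup_open.
exact: closed_openC (clopup_closed b).
Qed.

Lemma point_pfilter_surj (P : pf_space CU) : exists x, point_pfilter x = P.
Proof.
have [Pt Pb Pu Pm Pp] := pfsetP P.
pose C := [set proj1_sig U `&` ~` proj1_sig W | U in pfset P & W in ~` pfset P].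
have [x _ hx] : exists2 x, [set: X] x & forall c, C c -> c x.
  apply: compact_filtered_closed_inter (priestley_compact hP) _ _ _ _.
  - move=> _ [U _ [W _ <-]]; apply: closedI; first exact: clopup_closed.
    exact: open_closedC (clopup_open W).
  - exists (proj1_sig (ftop CU) `&` ~` proj1_sig (fbot CU)).
    by exists (ftop CU) => //; exists (fbot CU).
  - move=> _ _ [U1 P1 [W1 n1 <-]] [U2 P2 [W2 n2 <-]].
    exists (proj1_sig (fmeet U1 U2) `&` ~` proj1_sig (fjoin2 W1 W2)).
      by exists (fmeet U1 U2); [exact: Pm|exists (fjoin2 W1 W2) => //; case/Pp].
    by rewrite clopup_fjoin2E => y [[y1 y2] ny]; split; split => // h; apply: ny; [left|right].
  move=> _ [U PU [W nW <-]]; apply/set0P/negP => /eqP e; apply: nW; apply: Pu PU _ => y Uy.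
  apply: contrapT => nWy.
  by have : (setT `&` (proj1_sig U `&` ~` proj1_sig W)) y by []; rewrite e.
exists x; apply: pfset_inj; apply/seteqP; split => U.
  move=> Ux; apply: contrapT => nU.
  by have [] := hx (proj1_sig (ftop CU) `&` ~` proj1_sig U)
    (ex_intro2 _ _ (ftop CU) Pt (ex_intro2 _ _ U nU erefl)).
by move=> PU; have [] := hx (proj1_sig U `&` ~` proj1_sig (fbot CU))
  (ex_intro2 _ _ U PU (ex_intro2 _ _ (fbot CU) Pb erefl)).
Qed.

Definition point_pfilter_inv (P : pf_space CU) : X :=
  proj1_sig (cid (point_pfilter_surj P)).

Lemma point_pfilter_invK : cancel point_pfilter_inv point_pfilter.
Proof. by move=> P; exact: proj2_sig (cid (point_pfilter_surj P)). Qed.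

Lemma point_pfilterK : cancel point_pfilter point_pfilter_inv.
Proof. by move=> x; apply: point_pfilter_inj; rewrite point_pfilter_invK. Qed.

Lemma point_pfilter_inv_order_preserving : order_preserving point_pfilter_inv.
Proof. by move=> P Q PQ; apply: point_pfilter_reflect; rewrite !point_pfilter_invK. Qed.

Lemma point_pfilter_inv_continuous : continuous point_pfilter_inv.
Proof.
apply/continuousP => O oO; rewrite pfilter_openE => P OP.
have [U [V [cU cV UP nVP sub]]] := priestley_open_basis hP oO OP.
have eP := point_pfilter_invK P.
exists (exist _ U cU : CU), (exist _ V cV : CU); split; [by rewrite -eP|by rewrite -eP|].
by move=> Q QU QV; apply: sub; rewrite -(point_pfilter_invK Q) in QU QV.
Qed.

Lemma point_pfilter_coherent :
  coherent_L_morphism point_pfilter /\ coherent_L_morphism point_pfilter_inv.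
Proof.
split; apply: order_homeomorphism_coherent;
  by [exact: point_pfilterK|exact: point_pfilter_invK|exact: point_pfilter_continuous|
      exact: point_pfilter_inv_continuous|exact: point_pfilter_order_preserving|
      exact: point_pfilter_inv_order_preserving].
Qed.

End PointFilters.

(** * The duality *)

Definition pf_AlgLPries (L : AlgFrm) : AlgLPries :=
  AlgLPriesOb (pf_space_algebraic (@af_alg L)).

Definition pf_AlgLPries_hom (L M : AlgFrm) (h : AlgFrm_hom L M) :
  AlgLPries_hom (pf_AlgLPries M) (pf_AlgLPries L) :=
  exist _ (pf_preimage (proj2_sig h)) (pf_preimage_coherent (proj2_sig h)).

Definition clopup_AlgFrm_hom (X Y : AlgLPries) (f : AlgLPries_hom X Y) :
  AlgFrm_hom (clopup_AlgFrm Y) (clopup_AlgFrm X) :=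
  exist _ (@clopup_preimage _ _ (proj1 (al_alg X)) (al_alg Y) _ (proj2_sig f))
    (clopup_preimage_coherent (proj1 (al_alg X)) (al_alg Y) (proj2_sig f)).

Definition stone_unit (L : AlgFrm) : AlgFrm_hom L (clopup_AlgFrm (pf_AlgLPries L)) :=
  exist _ _ (proj1 (stone_clopup_coherent (proj1 (al_alg (pf_AlgLPries L))))).

Definition points_unit (X : AlgLPries) : AlgLPries_hom X (pf_AlgLPries (clopup_AlgFrm X)) :=
  exist _ _ (proj1 (point_pfilter_coherent (proj1 (al_alg X)))).

Lemma pf_AlgLPries_hom_id (L : AlgFrm) (i : AlgFrm_hom L L) :
  (forall a, proj1_sig i a = a) -> forall P, proj1_sig (pf_AlgLPries_hom i) P = P.
Proof.
by move=> iE P; apply: pfset_inj; apply/seteqP; split => a; rewrite /= /preimage /= iE.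
Qed.

Lemma pf_AlgLPries_hom_comp (L M N : AlgFrm) (h : AlgFrm_hom L M) (k : AlgFrm_hom M N)
    (kh : AlgFrm_hom L N) :
  (forall a, proj1_sig kh a = proj1_sig k (proj1_sig h a)) ->
  forall P, proj1_sig (pf_AlgLPries_hom kh) P
            = proj1_sig (pf_AlgLPries_hom h) (proj1_sig (pf_AlgLPries_hom k) P).
Proof.
by move=> khE P; apply: pfset_inj; apply/seteqP; split => a; rewrite /= /preimage /= khE.
Qed.

Lemma clopup_AlgFrm_hom_id (X : AlgLPries) (i : AlgLPries_hom X X) :
  (forall x, proj1_sig i x = x) -> forall U, proj1_sig (clopup_AlgFrm_hom i) U = U.
Proof.
by move=> iE U; apply: proj1_sig_inj; apply/seteqP; split => x; rewrite /= /preimage /= iE.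
Qed.

Lemma clopup_AlgFrm_hom_comp (X Y Z : AlgLPries) (f : AlgLPries_hom X Y)
    (g : AlgLPries_hom Y Z) (gf : AlgLPries_hom X Z) :
  (forall x, proj1_sig gf x = proj1_sig g (proj1_sig f x)) ->
  forall U, proj1_sig (clopup_AlgFrm_hom gf) U
            = proj1_sig (clopup_AlgFrm_hom f) (proj1_sig (clopup_AlgFrm_hom g) U).
Proof.
by move=> gfE U; apply: proj1_sig_inj; apply/seteqP; split => x; rewrite /= /preimage /= gfE.
Qed.

Lemma stone_unit_iso (L : AlgFrm) : AlgFrm_iso (stone_unit L).
Proof.
have [_ hinv] := stone_clopup_coherent (proj1 (al_alg (pf_AlgLPries L))).
by exists (exist _ _ hinv); split; [exact: stone_clopupK|exact: stone_clopup_invK].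
Qed.

Lemma stone_unit_natural (L M : AlgFrm) (h : AlgFrm_hom L M) a :
  proj1_sig (stone_unit M) (proj1_sig h a)
  = proj1_sig (clopup_AlgFrm_hom (pf_AlgLPries_hom h)) (proj1_sig (stone_unit L) a).
Proof. exact: proj1_sig_inj. Qed.

Lemma points_unit_iso (X : AlgLPries) : AlgLPries_iso (points_unit X).
Proof.
have [_ hinv] := point_pfilter_coherent (proj1 (al_alg X)).
by exists (exist _ _ hinv); split; [exact: point_pfilterK|exact: point_pfilter_invK].
Qed.

Lemma points_unit_natural (X Y : AlgLPries) (f : AlgLPries_hom X Y) x :
  proj1_sig (points_unit Y) (proj1_sig f x)
  = proj1_sig (pf_AlgLPries_hom (clopup_AlgFrm_hom f)) (proj1_sig (points_unit X) x).
Proof. exact: pfset_inj. Qed.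

Theorem theorem4p9 : dually_equivalent_AlgFrm_AlgLPries.
Proof.
exists pf_AlgLPries, pf_AlgLPries_hom, clopup_AlgFrm, clopup_AlgFrm_hom.
exists stone_unit, points_unit.
split.
- by split; [exact: pf_AlgLPries_hom_id|exact: pf_AlgLPries_hom_comp].
- by split; [exact: clopup_AlgFrm_hom_id|exact: clopup_AlgFrm_hom_comp].
- by split; [exact: stone_unit_iso|exact: stone_unit_natural].
- by split; [exact: points_unit_iso|exact: points_unit_natural].
Qed.
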